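(* Let $\epsilon\in(0,1)$, $u_0\in\mathbb{R}$, $h>0$, and let $(u_n)_{n\ge0}$ be a sequence of real numbers starting at $u_0$ and satisfying the Crank–Nicolson scheme $$\frac{u_n-u_{n-1}}{h}+\frac{1}{2\epsilon^2}\big(u_n^3-u_n\big)+\frac{1}{2\epsilon^2}\big(u_{n-1}^3-u_{n-1}\big)=0,\qquad n\ge1.$$ (i) If $u_0\in\{0,1,-1\}$ and $h\le 2\epsilon^2$, then $u_n=\mathrm{sign}(u_0)$ for all $n\ge1$. (ii) If $u_0\notin\{0,1,-1\}$, define $h^*(u_0,\epsilon)=\frac{2\epsilon^2}{u_0^2+|u_0|}$ if $|u_0|>1$ and $h^*(u_0,\epsilon)=\epsilon^2$ if $0<|u_0|<1$. Then $h^*>0$ and for every $h\in(0,h^*]$ the sequence $(u_n)$ is monotone and converges to $\mathrm{sign}(u_0)$ as $n\to\infty$. Moreover, $\inf_{u_0\in\mathbb{R}\setminus\{0,\pm1\}}h^*(u_0,\epsilon)=0$.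
   Context: The scheme discretizes the ODE $u'(t)+\frac{1}{\epsilon^2}(u^3-u)=0$, $u(0)=u_0$. For $h\le 2\epsilon^2$ each step equation has a unique real solution $u_n$. Here $\mathrm{sign}(0)=0$. *)

From Stdlib Require Import Reals.
From Coquelicot Require Import Coquelicot.
Open Scope R_scope.

Definition CN_scheme (eps h : R) (u : nat -> R) : Prop :=
  forall n : nat, (1 <= n)%nat ->
    (u n - u (n - 1)%nat) / h
    + 1 / (2 * eps ^ 2) * (u n ^ 3 - u n)
    + 1 / (2 * eps ^ 2) * (u (n - 1)%nat ^ 3 - u (n - 1)%nat) = 0.

(* h^*(u0, eps); only meaningful for u0 not in {0,1,-1}. *)
Definition hstar (u0 eps : R) : R :=
  if Rlt_dec 1 (Rabs u0) then 2 * eps ^ 2 / (u0 ^ 2 + Rabs u0) else eps ^ 2.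

Definition monotone_seq (u : nat -> R) : Prop :=
  (forall n, u n <= u (S n)) \/ (forall n, u (S n) <= u n).

(* Multiplying the scheme by h rewrites it as F(u_n) = G(u_(n-1)) with
   F x = x + k (x^3 - x), G x = x - k (x^3 - x) and k = h / (2 eps^2).
   For k <= 1 the implicit map F is strictly increasing, so comparing F(u_n)
   with F at u_(n-1) and at 1 locates u_n: for 0 < u_(n-1) < 1 and k <= 1/2 it
   lies in [u_(n-1), 1], for u_(n-1) > 1 and k (u_0^2 + u_0) <= 1 in
   [1, u_(n-1)].  The sequence is therefore monotone and bounded, and its limit
   is a root of x^3 - x bounded away from 0, hence 1.  Negative data follow from
   the odd symmetry of the scheme, and the roots 0, 1, -1 are fixed points of
   the injective step.  Finally h^*(u_0, eps) < 2 eps^2 / u_0 for u_0 > 1,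
   which forces the infimum to be 0. *)

From Stdlib Require Import Reals Lra Lia Psatz.
From Coquelicot Require Import Coquelicot.
Open Scope R_scope.

Definition cn_implicit (k x : R) : R := x + k * (x ^ 3 - x).

Definition cn_explicit (k x : R) : R := x - k * (x ^ 3 - x).

Definition cn_step (k : R) (u : nat -> R) : Prop :=
  forall n, cn_implicit k (u (S n)) = cn_explicit k (u n).

Lemma CN_scheme_cn_step (eps h : R) (u : nat -> R) :
  0 < eps -> 0 < h -> CN_scheme eps h u -> cn_step (h / (2 * eps ^ 2)) u.
Proof.
  intros Heps Hh Hscheme n.
  assert (Heps2 : 0 < eps ^ 2) by (apply pow_lt; lra).
  specialize (Hscheme (S n) ltac:(lia)).
  replace (S n - 1)%nat with n in Hscheme by lia.
  apply Rminus_diag_uniq.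
  rewrite <- (Rmult_0_r h), <- Hscheme.
  unfold cn_implicit, cn_explicit; field; lra.
Qed.

(* For k = 1 the map is x |-> x^3, so strictness survives the degenerate slope. *)
Lemma cn_implicit_lt (k x y : R) :
  0 <= k <= 1 -> x < y -> cn_implicit k x < cn_implicit k y.
Proof.
  intros Hk Hxy.
  assert (Hdiff : cn_implicit k y - cn_implicit k x
                  = (y - x) * ((1 - k) + k * (y ^ 2 + x * y + x ^ 2)))
    by (unfold cn_implicit; ring).
  assert (Hq : 0 < y ^ 2 + x * y + x ^ 2).
  { replace (y ^ 2 + x * y + x ^ 2) with (3 / 4 * (x + y) ^ 2 + / 4 * (y - x) ^ 2)
      by field.
    assert (0 < (y - x) ^ 2) by (apply pow_lt; lra).
    nra. }
  assert (Hslope : 0 < (1 - k) + k * (y ^ 2 + x * y + x ^ 2)).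
  { destruct (Rlt_or_le k 1); [| replace k with 1 by lra]; nra. }
  apply Rlt_0_minus; rewrite Hdiff; apply Rmult_lt_0_compat; lra.
Qed.

Lemma cn_implicit_le_reg (k x y : R) :
  0 <= k <= 1 -> cn_implicit k x <= cn_implicit k y -> x <= y.
Proof.
  intros Hk Hle.
  destruct (Rle_or_lt x y) as [Hxy | Hyx]; [exact Hxy |].
  pose proof (cn_implicit_lt k y x Hk Hyx); lra.
Qed.

Lemma cn_implicit_inj (k x y : R) :
  0 <= k <= 1 -> cn_implicit k x = cn_implicit k y -> x = y.
Proof.
  intros Hk Hxy.
  apply Rle_antisym; apply (cn_implicit_le_reg k); lra.
Qed.

Lemma cn_implicit_1 (k : R) : cn_implicit k 1 = 1.
Proof. unfold cn_implicit; ring. Qed.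

Lemma cn_step_const (k : R) (u : nat -> R) :
  0 <= k <= 1 -> cn_step k u -> u 0%nat ^ 3 - u 0%nat = 0 ->
  forall n, u n = u 0%nat.
Proof.
  intros Hk Hstep Hroot n; induction n as [| n IH]; [reflexivity |].
  rewrite <- IH; apply (cn_implicit_inj k); [exact Hk |].
  rewrite Hstep; unfold cn_explicit, cn_implicit; rewrite IH, Hroot; ring.
Qed.

Lemma cn_step_below_one (k x y : R) :
  0 < k <= 1 / 2 -> 0 < x <= 1 -> cn_implicit k y = cn_explicit k x ->
  x <= y <= 1.
Proof.
  intros Hk Hx Hxy; split; apply (cn_implicit_le_reg k); try lra.
  - rewrite Hxy; unfold cn_implicit, cn_explicit.
    assert (x ^ 3 - x <= 0) by nra; nra.
  - rewrite Hxy, cn_implicit_1; unfold cn_explicit.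
    assert (1 - (x - k * (x ^ 3 - x)) = (1 - x) * (1 - k * x - k * x ^ 2)) by ring.
    assert (0 <= 1 - k * x - k * x ^ 2) by nra.
    nra.
Qed.

Lemma cn_step_above_one (k x y : R) :
  0 < k -> k * (x ^ 2 + x) <= 1 -> 1 <= x -> cn_implicit k y = cn_explicit k x ->
  1 <= y <= x.
Proof.
  intros Hk HkM Hx Hxy.
  assert (Hk1 : 0 <= k <= 1) by nra.
  split; apply (cn_implicit_le_reg k); try exact Hk1.
  - rewrite Hxy, cn_implicit_1; unfold cn_explicit.
    assert (x - k * (x ^ 3 - x) - 1 = (x - 1) * (1 - k * (x ^ 2 + x))) by ring.
    assert (0 <= (x - 1) * (1 - k * (x ^ 2 + x))) by (apply Rmult_le_pos; lra).
    lra.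
  - rewrite Hxy; unfold cn_implicit, cn_explicit.
    assert (0 <= x ^ 3 - x) by nra; nra.
Qed.

Lemma cn_step_lim_root (k : R) (u : nat -> R) (L : R) :
  0 < k -> cn_step k u -> is_lim_seq u L -> L ^ 3 - L = 0.
Proof.
  intros Hk Hstep HL.
  assert (Himpl : is_lim_seq (fun n => cn_implicit k (u (S n))) (cn_implicit k L)).
  { apply is_lim_seq_continuous; [unfold cn_implicit; reg |].
    now apply is_lim_seq_incr_1 in HL. }
  assert (Hexpl : is_lim_seq (fun n => cn_explicit k (u n)) (cn_explicit k L))
    by (apply is_lim_seq_continuous; [unfold cn_explicit; reg | exact HL]).
  apply is_lim_seq_unique in Himpl, Hexpl.
  rewrite (Lim_seq_ext _ _ Hstep), Hexpl in Himpl.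
  injection Himpl; unfold cn_implicit, cn_explicit; intro Heq.
  assert (Hprod : k * (L ^ 3 - L) = 0) by lra.
  apply Rmult_integral in Hprod; lra.
Qed.

Lemma cn_lim_eq_1 (k : R) (u : nat -> R) (a L : R) :
  0 < k -> cn_step k u -> 0 < a -> (forall n, a <= u n) -> is_lim_seq u L -> L = 1.
Proof.
  intros Hk Hstep Ha Hlb HL.
  pose proof (cn_step_lim_root k u L Hk Hstep HL) as Hroot.
  assert (HaL : a <= L)
    by exact (is_lim_seq_le (fun _ => a) u a L Hlb (is_lim_seq_const a) HL).
  assert (Hfactor : L * ((L - 1) * (L + 1)) = 0) by (rewrite <- Hroot; ring).
  apply Rmult_integral in Hfactor as [H0 | H1]; [lra |].
  apply Rmult_integral in H1; lra.
Qed.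

Lemma cn_incr_to_1 (k : R) (u : nat -> R) :
  0 < k <= 1 / 2 -> cn_step k u -> 0 < u 0%nat <= 1 ->
  (forall n, u n <= u (S n)) /\ is_lim_seq u 1.
Proof.
  intros Hk Hstep Hu0.
  assert (Hinv : forall n, u 0%nat <= u n <= 1).
  { intro n; induction n as [| n IH]; [lra |].
    pose proof (cn_step_below_one k (u n) (u (S n)) Hk ltac:(lra) (Hstep n)); lra. }
  assert (Hincr : forall n, u n <= u (S n)).
  { intro n; pose proof (Hinv n).
    apply (cn_step_below_one k (u n) (u (S n)) Hk ltac:(lra) (Hstep n)). }
  split; [exact Hincr |].
  destruct (ex_finite_lim_seq_incr u 1 Hincr (fun n => proj2 (Hinv n))) as [L HL].
  replace 1 with L; [exact HL |].
  apply (cn_lim_eq_1 k u (u 0%nat) L); [lra | exact Hstep | lra | apply Hinv | exact HL].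
Qed.

Lemma cn_decr_to_1 (k : R) (u : nat -> R) :
  0 < k -> k * (u 0%nat ^ 2 + u 0%nat) <= 1 -> cn_step k u -> 1 <= u 0%nat ->
  (forall n, u (S n) <= u n) /\ is_lim_seq u 1.
Proof.
  intros Hk Hk0 Hstep Hu0.
  assert (Hbound : forall x, 1 <= x <= u 0%nat -> k * (x ^ 2 + x) <= 1) by (intros; nra).
  assert (Hinv : forall n, 1 <= u n <= u 0%nat).
  { intro n; induction n as [| n IH]; [lra |].
    pose proof (cn_step_above_one k (u n) (u (S n)) Hk (Hbound _ IH) (proj1 IH)
                  (Hstep n)); lra. }
  assert (Hdecr : forall n, u (S n) <= u n).
  { intro n; pose proof (Hinv n).
    apply (cn_step_above_one k (u n) (u (S n)) Hk (Hbound _ (Hinv n)) ltac:(lra)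
             (Hstep n)). }
  split; [exact Hdecr |].
  destruct (ex_finite_lim_seq_decr u 1 Hdecr (fun n => proj1 (Hinv n))) as [L HL].
  replace 1 with L; [exact HL |].
  apply (cn_lim_eq_1 k u 1 L); [lra | exact Hstep | lra | apply Hinv | exact HL].
Qed.

Lemma cn_step_opp (k : R) (u : nat -> R) : cn_step k u -> cn_step k (fun n => - u n).
Proof.
  intros Hstep n; specialize (Hstep n); unfold cn_implicit, cn_explicit in *.
  lra.
Qed.

Lemma cn_pos_monotone_to_1 (k : R) (u : nat -> R) :
  0 < k -> cn_step k u -> 0 < u 0%nat ->
  (u 0%nat <= 1 -> k <= 1 / 2) -> (1 <= u 0%nat -> k * (u 0%nat ^ 2 + u 0%nat) <= 1) ->
  monotone_seq u /\ is_lim_seq u 1.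
Proof.
  intros Hk Hstep Hu0 Hsmall Hlarge; unfold monotone_seq.
  destruct (Rle_or_lt (u 0%nat) 1) as [Hle | Hgt].
  - destruct (cn_incr_to_1 k u (conj Hk (Hsmall Hle)) Hstep (conj Hu0 Hle)); tauto.
  - pose proof (Rlt_le _ _ Hgt) as Hge.
    destruct (cn_decr_to_1 k u Hk (Hlarge Hge) Hstep Hge); tauto.
Qed.

Lemma cn_monotone_to_sign (k : R) (u : nat -> R) :
  0 < k -> cn_step k u -> u 0%nat <> 0 ->
  (Rabs (u 0%nat) <= 1 -> k <= 1 / 2) ->
  (1 <= Rabs (u 0%nat) -> k * (u 0%nat ^ 2 + Rabs (u 0%nat)) <= 1) ->
  monotone_seq u /\ is_lim_seq u (sign (u 0%nat)).
Proof.
  intros Hk Hstep Hu0 Hsmall Hlarge.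
  destruct (Rle_or_lt 0 (u 0%nat)) as [Hpos | Hneg].
  - rewrite Rabs_pos_eq in Hsmall, Hlarge by lra.
    rewrite sign_eq_1 by lra.
    apply (cn_pos_monotone_to_1 k); auto; lra.
  - rewrite Rabs_left in Hsmall, Hlarge by lra.
    rewrite sign_eq_m1 by lra.
    destruct (cn_pos_monotone_to_1 k (fun n => - u n) Hk (cn_step_opp k u Hstep))
      as [Hmono Hlim]; cbv beta; [lra | intro; apply Hsmall; lra | |].
    { replace ((- u 0%nat) ^ 2) with (u 0%nat ^ 2) by ring; intro; apply Hlarge; lra. }
    split.
    + destruct Hmono as [Hm | Hm]; [right | left]; intro n; specialize (Hm n); lra.
    + apply is_lim_seq_opp in Hlim; simpl in Hlim.
      apply (is_lim_seq_ext _ _ _ (fun n => Ropp_involutive (u n))).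
      now replace (-1) with (- (1)) by ring.
Qed.

Lemma hstar_gt0 (u0 eps : R) : eps <> 0 -> u0 <> 0 -> 0 < hstar u0 eps.
Proof.
  intros Heps Hu0.
  assert (0 < eps ^ 2) by (apply pow2_gt_0; exact Heps).
  assert (0 < Rabs u0) by (apply Rabs_pos_lt; exact Hu0).
  unfold hstar; destruct (Rlt_dec 1 (Rabs u0)); [apply Rdiv_lt_0_compat; nra | lra].
Qed.

Lemma le_hstar_step_bounds (u0 eps h : R) :
  0 < eps -> h <= hstar u0 eps ->
  (Rabs u0 <= 1 -> h / (2 * eps ^ 2) <= 1 / 2) /\
  (1 <= Rabs u0 -> h / (2 * eps ^ 2) * (u0 ^ 2 + Rabs u0) <= 1).
Proof.
  intros Heps Hh.
  assert (Heps2 : 0 < 2 * eps ^ 2) by nra.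
  unfold hstar in Hh; destruct (Rlt_dec 1 (Rabs u0)) as [Hgt | Hle].
  - split; [intro; lra | intros _].
    assert (Hq : 0 < u0 ^ 2 + Rabs u0) by nra.
    apply Rle_div_r in Hh; [| lra].
    replace (h / (2 * eps ^ 2) * (u0 ^ 2 + Rabs u0))
      with (h * (u0 ^ 2 + Rabs u0) / (2 * eps ^ 2)) by (field; lra).
    apply Rle_div_l; lra.
  - assert (Hk : h / (2 * eps ^ 2) <= 1 / 2) by (apply Rle_div_l; lra).
    split; [intros _; exact Hk | intro Hge].
    rewrite <- (pow2_abs u0); replace (Rabs u0) with 1 by lra; lra.
Qed.

Lemma hstar_lt_inv (u0 eps : R) : 0 < eps -> 1 < u0 -> hstar u0 eps < 2 * eps ^ 2 / u0.
Proof.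
  intros Heps Hu0.
  assert (Heps2 : 0 < 2 * eps ^ 2) by nra.
  unfold hstar; rewrite Rabs_pos_eq by lra.
  destruct (Rlt_dec 1 u0) as [_ | Hle]; [| lra].
  unfold Rdiv; apply Rmult_lt_compat_l; [exact Heps2 |].
  apply Rinv_lt_contravar; nra.
Qed.

(* The witness u0 = 1 + 2 eps^2 / r gives hstar u0 eps < r for any r > 0. *)
Lemma hstar_glb_0 (eps : R) :
  0 < eps ->
  is_glb_Rbar (fun x => exists u0, u0 <> 0 /\ u0 <> 1 /\ u0 <> -1 /\ x = hstar u0 eps)
    (Finite 0).
Proof.
  intros Heps.
  assert (Heps2 : 0 < 2 * eps ^ 2) by nra.
  split.
  - intros x [u0 (Hu0 & _ & _ & ->)]; simpl.
    apply Rlt_le, hstar_gt0; lra.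
  - intros [r | |] Hlb; simpl; [| | exact I].
    + destruct (Rle_or_lt r 0) as [Hr | Hr]; [exact Hr | exfalso].
      set (u0 := 1 + 2 * eps ^ 2 / r).
      assert (Hu0 : 1 < u0) by (unfold u0; assert (0 < 2 * eps ^ 2 / r)
                                   by (apply Rdiv_lt_0_compat; lra); lra).
      assert (Hrle : r <= hstar u0 eps) by (apply Hlb; exists u0; repeat split; lra).
      assert (Hlt : 2 * eps ^ 2 / u0 < r).
      { apply Rlt_div_l; [lra |].
        replace (r * u0) with (r + 2 * eps ^ 2) by (unfold u0; field; lra).
        lra. }
      pose proof (hstar_lt_inv u0 eps Heps Hu0); lra.
    + apply (Hlb (hstar 2 eps)); exists 2; repeat split; lra.
Qed.

Lemma sign_root (x : R) : x = 0 \/ x = 1 \/ x = -1 -> sign x = x.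
Proof.
  intros [-> | [-> | ->]]; [apply sign_0 | apply sign_eq_1 | apply sign_eq_m1]; lra.
Qed.

Theorem theorem3p2 (eps : R) (heps : 0 < eps < 1) :
  (forall (u0 h : R) (u : nat -> R),
     0 < h -> u 0%nat = u0 -> CN_scheme eps h u ->
     ((u0 = 0 \/ u0 = 1 \/ u0 = -1) -> h <= 2 * eps ^ 2 ->
        forall n : nat, (1 <= n)%nat -> u n = sign u0)
     /\
     (u0 <> 0 -> u0 <> 1 -> u0 <> -1 ->
        0 < hstar u0 eps /\
        (h <= hstar u0 eps -> monotone_seq u /\ is_lim_seq u (sign u0))))
  /\
  is_glb_Rbar (fun x => exists u0, u0 <> 0 /\ u0 <> 1 /\ u0 <> -1 /\ x = hstar u0 eps)
    (Finite 0).
Proof.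
  split; [| apply hstar_glb_0; lra].
  intros u0 h u Hh Hu0 Hscheme.
  assert (Heps2 : 0 < 2 * eps ^ 2) by nra.
  pose proof (CN_scheme_cn_step eps h u ltac:(lra) Hh Hscheme) as Hstep.
  assert (Hk : 0 < h / (2 * eps ^ 2)) by (apply Rdiv_lt_0_compat; lra).
  split.
  - intros Hroot Hh2 n _.
    assert (Hk1 : h / (2 * eps ^ 2) <= 1) by (apply Rle_div_l; lra).
    assert (Hcube : u 0%nat ^ 3 - u 0%nat = 0)
      by (rewrite Hu0; destruct Hroot as [-> | [-> | ->]]; ring).
    rewrite (cn_step_const (h / (2 * eps ^ 2)) u ltac:(lra) Hstep Hcube), Hu0.
    symmetry; exact (sign_root u0 Hroot).
  - intros Hu00 _ _; subst u0.
    split; [apply hstar_gt0; lra | intro Hhstar].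
    destruct (le_hstar_step_bounds (u 0%nat) eps h ltac:(lra) Hhstar).
    apply (cn_monotone_to_sign (h / (2 * eps ^ 2))); assumption.
Qed.
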